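(* Let $\mathcal{C}$ be a category and $\mathcal{W}$ a class of morphisms of $\mathcal{C}$ satisfying (L0) and (L1). Let $\mathcal{W}_L$ be the class of morphisms generated under composition by $\mathcal{W}$ and all split monomorphisms of $\mathcal{C}$. Then the following two conditions are equivalent: (L2): for every $w\in\mathcal{W}$ and parallel morphisms $f_1,f_2$ with $\mathrm{dom}(f_i)=\mathrm{cod}(w)$ and $f_1w=f_2w$, there exists $w'\in\mathcal{W}$ with $\mathrm{dom}(w')=\mathrm{cod}(f_1)$ and $w'f_1=w'f_2$; (L2'): for every $w\in\mathcal{W}$ and parallel morphisms $f_1,f_2$ with $\mathrm{dom}(f_i)=\mathrm{cod}(w)$ and $f_1w=f_2w$, there exists $w'\in\mathcal{W}_L$ with $\mathrm{dom}(w')=\mathrm{cod}(f_1)$ and $w'f_1=w'f_2$. Here (L0): $\mathcal{W}$ contains all identity morphisms and is closed under composition; (L1): for every $w\in\mathcal{W}$ and every morphism $f$ with $\mathrm{dom}(f)=\mathrm{dom}(w)$ there exist $w'\in\mathcal{W}$ with $\mathrm{dom}(w')=\mathrm{cod}(f)$ and a morphism $f'$ with $\mathrm{dom}(f')=\mathrm{cod}(w)$, $\mathrm{cod}(f')=\mathrm{cod}(w')$, such that $w'f=f'w$.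
   Context: A split monomorphism is a morphism $m$ having a left inverse $e$, i.e. $em=\mathrm{id}$. *)

Set Implicit Arguments.
Unset Strict Implicit.

Record Category := {
  Ob :> Type;
  Hom : Ob -> Ob -> Type;
  idm : forall a : Ob, Hom a a;
  comp : forall a b c : Ob, Hom b c -> Hom a b -> Hom a c;
  comp_assoc : forall (a b c d : Ob) (h : Hom c d) (g : Hom b c) (f : Hom a b),
      comp h (comp g f) = comp (comp h g) f;
  comp_id_l : forall (a b : Ob) (f : Hom a b), comp (idm b) f = f;
  comp_id_r : forall (a b : Ob) (f : Hom a b), comp f (idm a) = f
}.

Arguments Hom {C} _ _ : rename.
Arguments idm {C} _ : rename.
Arguments comp {C a b c} _ _ : rename.

Definition MorClass (C : Category) := forall a b : C, Hom a b -> Prop.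

Definition split_mono (C : Category) (a b : C) (m : Hom a b) : Prop :=
  exists e : Hom b a, comp e m = idm a.

Inductive WL (C : Category) (W : MorClass C) : forall a b : C, Hom a b -> Prop :=
  | WL_W : forall (a b : C) (w : Hom a b), W a b w -> WL W w
  | WL_split : forall (a b : C) (m : Hom a b), split_mono m -> WL W m
  | WL_comp : forall (a b c : C) (g : Hom b c) (f : Hom a b),
      WL W g -> WL W f -> WL W (comp g f).

Definition L0 (C : Category) (W : MorClass C) : Prop :=
  (forall a : C, W a a (idm a)) /\
  (forall (a b c : C) (g : Hom b c) (f : Hom a b),
      W b c g -> W a b f -> W a c (comp g f)).

Definition L1 (C : Category) (W : MorClass C) : Prop :=
  forall (a b c : C) (w : Hom a b) (f : Hom a c), W a b w ->
    exists (d : C) (w' : Hom c d) (f' : Hom b d),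
      W c d w' /\ comp w' f = comp f' w.

Definition L2_with (C : Category) (W V : MorClass C) : Prop :=
  forall (a b c : C) (w : Hom a b) (f1 f2 : Hom b c),
    W a b w -> comp f1 w = comp f2 w ->
    exists (d : C) (w' : Hom c d), V c d w' /\ comp w' f1 = comp w' f2.

Definition L2 (C : Category) (W : MorClass C) : Prop := L2_with W W.
Definition L2' (C : Category) (W : MorClass C) : Prop := L2_with W (@WL C W).


(* Every morphism v of W_L is W-dominated: some w in W factors as h v, so a
   W_L-morphism equalizing f1 and f2 yields a W-morphism that does too.
   For a split mono m with retraction r, apply (L1) to r: w r = h' u gives
   w = w (r m) = h' u m.  Compositions go through by carrying a W-morphism u
   on the left of v in the induction. *)

Section Domination.

Variable C : Category.
Variable W : MorClass C.
Hypothesis HL0 : L0 W.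
Hypothesis HL1 : L1 W.

Lemma WL_comp_W_dominated {b c : C} {v : Hom b c} :
  WL W v -> forall (d : C) (u : Hom c d), W c d u ->
  exists (e : C) (w : Hom b e) (h : Hom d e), W b e w /\ w = comp h (comp u v).
Proof.
  destruct HL0 as [W_id W_comp].
  induction 1 as [a b w Hw | a b m [r Hr] | a b c g f _ IHg _ IHf];
    intros d u Hu.
  - exists d, (comp u w), (idm d). split.
    + exact (W_comp _ _ _ u w Hu Hw).
    + symmetry. apply comp_id_l.
  - destruct (HL1 _ _ _ u r Hu) as [e [w [h [Hw Hsq]]]].
    exists e, w, h. split; [exact Hw |].
    rewrite <- (comp_id_r w), <- Hr, comp_assoc, Hsq, comp_assoc.
    reflexivity.
  - destruct (IHg d u Hu) as [e1 [w1 [h1 [Hw1 E1]]]].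
    destruct (IHf e1 w1 Hw1) as [e2 [w2 [h2 [Hw2 E2]]]].
    exists e2, w2, (comp h2 h1). split; [exact Hw2 |].
    rewrite E2, E1, !comp_assoc. reflexivity.
Qed.

Lemma WL_W_dominated {b c : C} {v : Hom b c} :
  WL W v -> exists (e : C) (w : Hom b e) (h : Hom c e), W b e w /\ w = comp h v.
Proof.
  intros Hv.
  destruct (WL_comp_W_dominated Hv c (idm c) (proj1 HL0 c)) as [e [w [h [Hw E]]]].
  exists e, w, h. split; [exact Hw |].
  rewrite E, comp_id_l. reflexivity.
Qed.

Lemma WL_coequalized_by_W {b c x : C} {v : Hom b c} {f1 f2 : Hom x b} :
  WL W v -> comp v f1 = comp v f2 ->
  exists (e : C) (w : Hom b e), W b e w /\ comp w f1 = comp w f2.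
Proof.
  intros Hv Heq.
  destruct (WL_W_dominated Hv) as [e [w [h [Hw E]]]].
  exists e, w. split; [exact Hw |].
  rewrite E, <- !comp_assoc, Heq. reflexivity.
Qed.

End Domination.

Theorem mainTheorem2 (C : Category) (W : MorClass C) :
  L0 W -> L1 W -> (L2 W <-> L2' W).
Proof.
  intros HL0 HL1. split.
  - intros HL2 a b c w f1 f2 Hw Heq.
    destruct (HL2 a b c w f1 f2 Hw Heq) as [d [w' [Hw' E]]].
    exists d, w'. split; [apply WL_W; exact Hw' | exact E].
  - intros HL2' a b c w f1 f2 Hw Heq.
    destruct (HL2' a b c w f1 f2 Hw Heq) as [d [v [Hv E]]].
    eapply WL_coequalized_by_W; eassumption.
Qed.
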